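(* Let $G$ be a finite simple graph on $n$ vertices such that $\xi(G)=1$, i.e. $G$ has exactly one independent set of size $\alpha(G)$. Then $i_{\alpha(G)-1}\le 3^{\frac{n}{3}}+n-1$, where $i_{\alpha(G)-1}$ is the number of independent sets of size $\alpha(G)-1$ in $G$.
   Context: $\alpha(G)$ is the independence number of $G$ (maximum size of an independent set), $\xi(G)$ is the number of maximum independent sets of $G$, and $i_k$ denotes the number of independent sets of size $k$ in $G$. *)

From mathcomp Require Import all_boot.
From Stdlib Require Import Reals.
Set Implicit Arguments. Unset Strict Implicit. Unset Printing Implicit Defensive.

Definition simple_graph (T : finType) (e : rel T) : Prop :=
  symmetric e /\ irreflexive e.

Definition independent (T : finType) (e : rel T) (S : {set T}) : bool :=
  [forall x in S, forall y in S, ~~ e x y].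

Definition alpha (T : finType) (e : rel T) : nat :=
  \max_(S : {set T} | independent e S) #|S|.

Definition num_indep (T : finType) (e : rel T) (k : nat) : nat :=
  #|[set S : {set T} | independent e S & #|S| == k]|.

Definition xi (T : finType) (e : rel T) : nat := num_indep e (alpha e).

From mathcomp Require Import all_boot zify.
From Stdlib Require Import Reals Lra Psatz.
(* Reals rebinds [^] on nat to [Nat.pow]; restore ssrnat's [expn]. *)
Import ssrnat.
Set Implicit Arguments. Unset Strict Implicit. Unset Printing Implicit Defensive.

(* Let S be the unique maximum independent set.  An independent set of size
   alpha - 1 is either S minus one vertex, or it is not contained in S; then it
   is maximal, since any one-vertex extension would be a maximum independent
   set different from S.  Hence i_(alpha-1) <= |S| + (m - 1), where m is the
   number of maximal independent sets, and the Moon--Moser bound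
   m <= 3^(n/3) concludes. *)

Lemma expn3_leq_exp3 n : n ^ 3 <= 3 ^ n.
Proof.
elim: n => // n IHn; have [n_lt3 | n_ge3] := ltnP n 3.
  by case: n n_lt3 {IHn} => [|[|[|]]].
have step : n.+1 ^ 3 <= 3 * n ^ 3 by rewrite !expnS expn0; nia.
by apply: leq_trans step _; rewrite [3 ^ n.+1]expnS leq_mul2l IHn orbT.
Qed.

Lemma card_bigcup_leq (T I : finType) (P : {pred I}) (B : I -> {set T}) :
  #|\bigcup_(i in P) B i| <= \sum_(i in P) #|B i|.
Proof.
apply: (big_ind2 (fun (X : {set T}) n => #|X| <= n)) => [|X1 n1 X2 n2 le1 le2|//].
  by rewrite cards0.
by apply: leq_trans (leq_card_setU X1 X2) _; apply: leq_add.
Qed.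

Lemma subset_card_pred_setD1 (T : finType) (I S : {set T}) :
  I \subset S -> #|I| = #|S| - 1 -> 0 < #|S| -> exists2 x, x \in S & I = S :\ x.
Proof.
move=> sIS cardI S_gt0.
have /cards1P [x Dx] : #|S :\: I| == 1.
  by rewrite cardsD (setIidPr sIS) cardI; apply/eqP; lia.
have : x \in S :\: I by rewrite Dx set11.
rewrite inE => /andP [_ Sx]; exists x => //.
by rewrite -Dx setDDr setDv set0U (setIidPr sIS).
Qed.

Lemma INR_expn m n : INR (m ^ n) = (INR m ^ n)%R.
Proof. by elim: n => [|n IHn] //=; rewrite expnS mult_INR IHn. Qed.

Lemma Rle_Rpower3_of_cube_leq (m n : nat) :
  m ^ 3 <= 3 ^ n -> (INR m <= Rpower 3 (INR n / 3))%R.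
Proof.
move=> /leP /le_INR; rewrite !INR_expn [INR 3]/= => cube_le.
set r := Rpower 3 (INR n / 3).
have r_gt0 : (0 < r)%R by apply: exp_pos.
have r_cube : (r ^ 3 = (1 + 1 + 1) ^ n)%R.
  rewrite -(Rpower_pow 3 _ r_gt0) Rpower_mult -Rpower_pow; last lra.
  by congr Rpower; rewrite /=; field.
rewrite -r_cube in cube_le; apply: Rnot_lt_le => r_lt_m.
have : (0 < INR m ^ 2 + INR m * r + r ^ 2)%R by nra.
nra.
Qed.

Section MaximalIndependentSets.

Variables (T : finType) (e : rel T).
Hypotheses (e_sym : symmetric e) (e_irr : irreflexive e).

Definition closed_nbh (U : {set T}) (u : T) : {set T} := u |: [set x in U | e u x].

Definition maximal_independent (U I : {set T}) : bool :=
  [&& I \subset U, independent e I & [forall v in U :\: I, exists w in I, e v w]].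

Definition num_maxind (U : {set T}) : nat := #|[set I | maximal_independent U I]|.

Lemma independentP (I : {set T}) :
  reflect {in I &, forall x y, ~~ e x y} (independent e I).
Proof.
apply: (iffP forall_inP) => [indI x y Ix Iy | indI x Ix].
  exact: (forall_inP (indI x Ix)).
by apply/forall_inP => y; apply: indI.
Qed.

Lemma independent_setU1 (I : {set T}) (v : T) :
  independent e I -> {in I, forall w, ~~ e v w} -> independent e (v |: I).
Proof.
move=> /independentP indI v_nadj; apply/independentP => x y.
case/setU1P => [-> | Ix] /setU1P [-> | Iy].
- by rewrite e_irr.
- exact: v_nadj.
- by rewrite e_sym; apply: v_nadj.
- exact: indI.
Qed.

Lemma closed_nbh_sub (U : {set T}) (u : T) : u \in U -> closed_nbh U u \subset U.
Proof. by move=> Uu; apply/subsetP => x /setU1P [-> | /setIdP []]. Qed.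

Lemma num_maxind_set0 : num_maxind set0 <= 1.
Proof.
rewrite /num_maxind -(cards1 (set0 : {set T})); apply: subset_leq_card.
by apply/subsetP => I; rewrite !inE -subset0 => /andP [].
Qed.

Lemma maximal_independent_meets_closed_nbh (U I : {set T}) (v : T) :
  v \in U -> maximal_independent U I -> exists2 u, u \in closed_nbh U v & u \in I.
Proof.
move=> Uv /and3P [sIU _ /forall_inP dom]; have [Iv | Inv] := boolP (v \in I).
  by exists v; rewrite ?setU11.
have /exists_inP [w Iw e_vw] : [exists w in I, e v w] by apply: dom; rewrite inE Inv.
by exists w; rewrite // !inE e_vw (subsetP sIU) ?orbT.
Qed.

Lemma card_maximal_independent_mem_leq (U : {set T}) (u : T) :
  #|[set I | maximal_independent U I & u \in I]| <= num_maxind (U :\: closed_nbh U u).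
Proof.
rewrite -(card_in_imset (f := fun I => I :\ u)); last first.
  move=> I J /setIdP [_ Iu] /setIdP [_ Ju] /= eqIJ.
  by rewrite -(setD1K Iu) -(setD1K Ju) eqIJ.
apply: subset_leq_card; apply/subsetP => _ /imsetP [I /setIdP [maxI Iu] ->].
move: maxI => /and3P [sIU /independentP indI /forall_inP dom].
rewrite inE; apply/and3P; split.
- apply/subsetP => x /setD1P [x_neq_u Ix].
  by rewrite !inE (negbTE x_neq_u) (subsetP sIU) // (negbTE (indI u x Iu Ix)).
- by apply/independentP => x y /setD1P [_ Ix] /setD1P [_ Iy]; apply: indI.
- apply/forall_inP => x; rewrite !inE.
  move=> /and3P [I'x /norP [x_neq_u /nandP [/negP // | u_nadj_x]] Ux].
  have /exists_inP [w Iw e_xw] : [exists w in I, e x w].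
    by apply: dom; rewrite inE Ux andbT; apply: contra I'x; rewrite x_neq_u.
  apply/exists_inP; exists w => //; rewrite !inE Iw andbT.
  by apply: (contraNneq _ u_nadj_x) => <-; rewrite e_sym.
Qed.

Lemma num_maxind_leq_sum (U : {set T}) (v : T) : v \in U ->
  num_maxind U <= \sum_(u in closed_nbh U v) num_maxind (U :\: closed_nbh U u).
Proof.
move=> Uv; pose M u := [set I | maximal_independent U I & u \in I].
apply: (@leq_trans (\sum_(u in closed_nbh U v) #|M u|)); last first.
  by apply: leq_sum => u _; apply: card_maximal_independent_mem_leq.
apply: leq_trans _ (card_bigcup_leq _ _); apply: subset_leq_card.
apply/subsetP => I; rewrite inE => maxI.
have [u Nvu Iu] := maximal_independent_meets_closed_nbh Uv maxI.
by apply/bigcupP; exists u; rewrite // inE maxI.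
Qed.

(* Moon--Moser: branching on a closed neighbourhood of minimum size d leaves
   at most d subproblems, each on at most |U| - d vertices, and d^3 <= 3^d. *)
Theorem num_maxind_cube_leq (U : {set T}) : num_maxind U ^ 3 <= 3 ^ #|U|.
Proof.
have [n] := ubnP #|U|; elim: n U => // n IHn U /ltnSE le_U_n.
have [-> | /set0Pn [v0 Uv0]] := eqVneq U set0.
  by rewrite cards0; case: (num_maxind set0) num_maxind_set0 => [|[]].
pose N := closed_nbh U.
have [v Uv minNv] := arg_minnP (fun u => #|N u|) Uv0.
set d := #|N v|.
have d_gt0 : 0 < d by apply/card_gt0P; exists v; apply: setU11.
have le_d_U : d <= #|U| by apply/subset_leq_card/closed_nbh_sub.
have card_rest u : u \in N v -> #|U :\: N u| <= #|U| - d.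
  move=> Nvu; have Uu := subsetP (closed_nbh_sub Uv) u Nvu.
  by rewrite cardsD (setIidPr (closed_nbh_sub Uu)) leq_sub2l ?minNv.
pose m := \max_(u in N v) num_maxind (U :\: N u).
have m_cube : m ^ 3 <= 3 ^ (#|U| - d).
  rewrite /m; have [u Nvu ->] := eq_bigmax_cond (fun u => num_maxind (U :\: N u)) d_gt0.
  have le_rest := card_rest u Nvu.
  apply: leq_trans (IHn _ _) _; first by apply: leq_ltn_trans le_rest _; lia.
  by rewrite leq_pexp2l.
have le_num_dm : num_maxind U <= d * m.
  apply: leq_trans (num_maxind_leq_sum Uv) _; rewrite -sum_nat_const.
  by apply: leq_sum => u Nvu; apply: leq_bigmax_cond.
apply: (@leq_trans ((d * m) ^ 3)); first by rewrite leq_exp2r.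
by rewrite expnMn -(subnKC le_d_U) expnD leq_mul ?expn3_leq_exp3.
Qed.

Lemma independent_leq_alpha (I : {set T}) : independent e I -> #|I| <= alpha e.
Proof. by move=> indI; apply: (leq_bigmax_cond (F := fun S : {set T} => #|S|)). Qed.

Lemma alpha_gt0 : 0 < #|T| -> 0 < alpha e.
Proof.
move=> /card_gt0P [x _]; rewrite -(cards1 x); apply: independent_leq_alpha.
by apply/independentP => y z /set1P -> /set1P ->; rewrite e_irr.
Qed.

Lemma maximal_independent_setT (I : {set T}) :
  independent e I -> {in ~: I, forall v, ~~ independent e (v |: I)} ->
  maximal_independent setT I.
Proof.
move=> indI non_ext; rewrite /maximal_independent subsetT indI /=.
apply/forall_inP => v; rewrite setTD => I'v; apply: contraT => /exists_inPn v_nadj.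
by move: (non_ext v I'v); rewrite independent_setU1.
Qed.

Section UniqueMaximumIndependentSet.

Variable S : {set T}.
Hypothesis S_unique : [set I | independent e I & #|I| == alpha e] = [set S].

Lemma unique_maximum_independent (I : {set T}) :
  (independent e I && (#|I| == alpha e)) = (I == S).
Proof. by rewrite -in_set1 -S_unique inE. Qed.

Lemma maximal_independent_unique_maximum : maximal_independent setT S.
Proof.
have /andP [indS /eqP cardS] : independent e S && (#|S| == alpha e).
  by rewrite unique_maximum_independent.
apply: maximal_independent_setT => // v; rewrite inE => S'v.
apply/negP => /independent_leq_alpha; rewrite cardsU1 S'v cardS; lia.
Qed.

Lemma independent_alpha_pred_subset : 0 < alpha e ->
  [set I | independent e I & #|I| == alpha e - 1] \subset
    [set S :\ x | x in S] :|: [set I | maximal_independent setT I] :\ S.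
Proof.
move=> alpha_gt0; apply/subsetP => I /setIdP [indI /eqP cardI].
have /andP [_ /eqP cardS] : independent e S && (#|S| == alpha e).
  by rewrite unique_maximum_independent.
have [sIS | nsIS] := boolP (I \subset S).
  apply/setUP; left; apply/imsetP.
  by apply: subset_card_pred_setD1; rewrite ?cardS //; lia.
apply/setUP; right; rewrite !inE; apply/andP; split.
  by apply: contraNneq nsIS => ->.
apply: maximal_independent_setT => // v; rewrite inE => I'v.
apply/negP => indvI; have cardvI : #|v |: I| == alpha e.
  by have := independent_leq_alpha indvI; rewrite cardsU1 I'v cardI; lia.
have /eqP DvI : v |: I == S by rewrite -unique_maximum_independent indvI cardvI.
by move: nsIS; rewrite -DvI subsetUr.
Qed.

Lemma num_indep_alpha_pred_leq : 0 < alpha e ->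
  num_indep e (alpha e - 1) + 1 <= #|T| + num_maxind setT.
Proof.
move=> alpha_gt0; pose removals := [set S :\ x | x in S].
pose others := [set I | maximal_independent setT I] :\ S.
have le_union : num_indep e (alpha e - 1) <= #|removals :|: others|.
  exact: subset_leq_card (independent_alpha_pred_subset alpha_gt0).
have le_card_union : #|removals :|: others| <= #|removals| + #|others|.
  exact: leq_card_setU.
have le_removals : #|removals| <= #|T| := leq_trans (leq_imset_card _ _) (max_card _).
have card_maxind : num_maxind setT = #|others|.+1.
  by rewrite /num_maxind (cardsD1 S) inE maximal_independent_unique_maximum.
lia.
Qed.

End UniqueMaximumIndependentSet.

End MaximalIndependentSets.

Theorem lemma2 (T : finType) (e : rel T) :
  (0 < #|T|)%N ->
  simple_graph e ->
  xi e = 1%N ->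
  (INR (num_indep e (alpha e - 1)) <=
     Rpower 3 (INR #|T| / 3) + INR #|T| - 1)%R.
Proof.
move=> T_gt0 [e_sym e_irr] /eqP xi1; have /cards1P [S S_unique] := xi1.
have count := num_indep_alpha_pred_leq e_sym e_irr S_unique (alpha_gt0 e_irr T_gt0).
have moon_moser : (INR (num_maxind e setT) <= Rpower 3 (INR #|T| / 3))%R.
  by apply: Rle_Rpower3_of_cube_leq; rewrite -cardsT num_maxind_cube_leq.
move: count => /leP /le_INR; rewrite -!plusE !plus_INR INR_1; lra.
Qed.
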